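(* Assume $a^1_K:=\langle[H_1,[H_0,H_1]]\varphi_1,\varphi_K\rangle\neq0$. There exists $T^*>0$ such that for every $T\in(0,T^* )$ and every real $s\in L^2(0,T)$, $-\operatorname{sign}(a^1_K)\,Q(s)\ge\frac{|a^1_K|}{8}\int_0^Ts(t)^2dt$, where $$Q(s)=-\frac{a^1_K}{2}\int_0^Ts(t)^2\cos[(\lambda_K-\lambda_1)(t-T)]dt+\sum_{j=1}^p\langle[H_0,H_1]\varphi_1,\varphi_j\rangle\langle[H_0,H_1]\varphi_j,\varphi_K\rangle\int_0^Ts(t)\int_0^ts(\tau)\sin\big(\lambda_j(\tau-t)+\lambda_K(t-T)+\lambda_1(T-\tau)\big)d\tau dt.$$
   Context: $H_0,H_1$ real symmetric $p\times p$ matrices, $[M,N]=MN-NM$, $(\varphi_j)$ a real orthonormal eigenbasis of $H_0$ with eigenvalues $\lambda_j$, $K\in\{1,\dots,p\}$, $\langle\cdot,\cdot\rangle$ the Hermitian product of $\mathbb{C}^p$. *)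

From HB Require Import structures.
From mathcomp Require Import all_boot all_order all_algebra.
From mathcomp Require Import all_classical all_reals all_analysis.
Set Implicit Arguments. Unset Strict Implicit. Unset Printing Implicit Defensive.
Import Order.TTheory GRing.Theory Num.Theory.
Local Open Scope ring_scope.
Local Open Scope classical_set_scope.

Section Defs.
Variables (R : realType) (p : nat).

Definition comm (M N : 'M[R]_p) : 'M[R]_p := M *m N - N *m M.

(* <u, v> = sum_i u_i * conj(v_i); all vectors here are real, so the
   Hermitian product of C^p restricts to the usual real inner product. *)
Definition dotv (u v : 'cV[R]_p) : R := \sum_(i < p) u i 0 * v i 0.

Definition Lint (a b : R) (f : R -> R) : R :=
  Rintegral (@lebesgue_measure R) `[a, b] f.

(* a^1_K = < [H1,[H0,H1]] phi_1, phi_K >, index 1 is ord0 *)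
Definition aK (H0 H1 : 'M[R]_p) (phi : 'I_p -> 'cV[R]_p) (i1 K : 'I_p) : R :=
  dotv (comm H1 (comm H0 H1) *m phi i1) (phi K).

Definition Qform (H0 H1 : 'M[R]_p) (phi : 'I_p -> 'cV[R]_p) (lam : 'I_p -> R)
  (i1 K : 'I_p) (T : R) (s : R -> R) : R :=
  - (aK H0 H1 phi i1 K / 2) *
      Lint 0 T (fun t => s t ^+ 2 * cos ((lam K - lam i1) * (t - T)))
  + \sum_(j < p) dotv (comm H0 H1 *m phi i1) (phi j) *
                 dotv (comm H0 H1 *m phi j) (phi K) *
      Lint 0 T (fun t => s t * Lint 0 t (fun tau =>
          s tau * sin (lam j * (tau - t) + lam K * (t - T) + lam i1 * (T - tau)))).

End Defs.

From HB Require Import structures.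
From mathcomp Require Import all_boot all_order all_algebra.
From mathcomp Require Import all_classical all_reals all_analysis.
From mathcomp Require Import ring lra measurable_realfun.
Set Implicit Arguments. Unset Strict Implicit. Unset Printing Implicit Defensive.
Import Order.TTheory GRing.Theory Num.Theory.
Local Open Scope ring_scope.
Local Open Scope classical_set_scope.

(* For small T the cosine in the first term of Q is at least 1/2 on [0, T],
   so that term contributes at least |a|/4 \int_0^T s^2 to -sign(a) Q.  Each
   double integral in the sum is at most (\int_0^T |s|)^2 <= T \int_0^T s^2 by
   Cauchy--Schwarz, since the sine kernel is bounded by 1; hence the whole sum
   is O(T) \int_0^T s^2, which is at most |a|/8 \int_0^T s^2 for T small. *)

Section integral_bounds.
Context {d : measure_display} {T : measurableType d} {R : realType}.
Variable mu : {measure set T -> \bar R}.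

Lemma ge0_le_integral_nonmeas (D : set T) (f g : T -> \bar R) :
  (forall x, D x -> (0 <= f x)%E) -> (forall x, D x -> (f x <= g x)%E) ->
  (\int[mu]_(x in D) f x <= \int[mu]_(x in D) g x)%E.
Proof.
move=> f0 fg.
have g0 x : D x -> (0 <= g x)%E by move=> Dx; exact: le_trans (f0 x Dx) (fg x Dx).
rewrite (ge0_integralE mu f0) (ge0_integralE mu g0).
apply: ereal_sup_le => _ [h hf <-]; exists h => //= x.
apply: le_trans (hf x) _; rewrite /patch; case: ifP => // /set_mem; exact: fg.
Qed.

(* No measurability of [f] is required: this is what lets us bound integrands
   such as [t |-> s t * \int_0^t ...] whose measurability is not available. *)
Lemma le_normr_Rintegral_dom (D : set T) (f G : T -> R) : measurable D ->
  (forall x, D x -> `|f x| <= G x) -> mu.-integrable D (EFin \o G) ->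
  `|\int[mu]_(x in D) f x| <= \int[mu]_(x in D) G x.
Proof.
move=> mD fG iG.
have part_le (h : T -> \bar R) : (forall x, D x -> 0 <= h x <= `|f x|%:E)%E ->
    (0 <= \int[mu]_(x in D) h x <= \int[mu]_(x in D) (G x)%:E)%E.
  move=> h0; apply/andP; split.
    by apply: integral_ge0 => x /h0 /andP[].
  apply: ge0_le_integral_nonmeas => x /[dup] Dx /h0 /andP[// hx0 hxf].
  by apply: le_trans hxf _; rewrite lee_fin fG.
have hP : (0 <= \int[mu]_(x in D) (EFin \o f)^\+ x
              <= \int[mu]_(x in D) (G x)%:E)%E.
  apply: part_le => x _.
  by rewrite funepos_ge0 funeposE ge_max lee_fin ler_norm lee_fin normr_ge0.
have hN : (0 <= \int[mu]_(x in D) (EFin \o f)^\- x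
              <= \int[mu]_(x in D) (G x)%:E)%E.
  apply: part_le => x _.
  by rewrite funeneg_ge0 funenegE ge_max lee_fin -normrN ler_norm lee_fin normr_ge0.
rewrite /Rintegral integralE.
move: hP hN (integrable_fin_num mD iG).
move: (\int[mu]_(x in D) _)%E (\int[mu]_(x in D) _)%E (\int[mu]_(x in D) _)%E.
move=> [p| |] [n| |] [i| |] //=; rewrite ?lee_fin ?leey ?leNye ?andbF //=.
move=> /andP[p0 pi] /andP[n0 ni] _; rewrite ler_norml; apply/andP; split; lra.
Qed.

Lemma integrable_cst_finite (D : set T) (c : R) : measurable D ->
  (mu D < +oo)%E -> mu.-integrable D (EFin \o cst c).
Proof. by move=> mD Dfin; apply: measurable_bounded_integrable => //; exact: bounded_cst. Qed.

Lemma integrable_normr_of_sqr (D : set T) (s : T -> R) : measurable D ->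
  (mu D < +oo)%E -> measurable_fun D s ->
  mu.-integrable D (fun t => (s t ^+ 2)%:E) ->
  mu.-integrable D (EFin \o (fun t => `|s t|)).
Proof.
move=> mD Dfin ms is2.
have sq_add1 : mu.-integrable D ((fun t => (s t ^+ 2)%:E) \+ (EFin \o cst 1%R))%E.
  by apply: integrableD => //; exact: integrable_cst_finite.
apply: le_integrable sq_add1 => //.
  by apply/measurable_EFinP; apply: measurableT_comp.
move=> x _ /=; rewrite lee_fin normr_id (le_trans _ (ler_norm _)) //.
by rewrite -real_normK ?num_real //; have := normr_ge0 (s x); nra.
Qed.

(* Cauchy--Schwarz against the constant 1, via the pointwise AM-GM bound
   [2 c |s| <= s^2 + c^2] with [c] the mean of [|s|]. *)
Lemma Rintegral_normr_sqr_le (D : set T) (m : R) (s : T -> R) : measurable D ->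
  mu D = m%:E -> 0 < m -> measurable_fun D s ->
  mu.-integrable D (fun t => (s t ^+ 2)%:E) ->
  (\int[mu]_(x in D) `|s x|) ^+ 2 <= m * \int[mu]_(x in D) s x ^+ 2.
Proof.
move=> mD Dm m0 ms is2.
have Dfin : (mu D < +oo)%E by rewrite Dm ltry.
have iA := integrable_normr_of_sqr mD Dfin ms is2.
set M := \int[mu]_(x in D) `|s x|; set S := \int[mu]_(x in D) s x ^+ 2.
pose c := M / m.
have cm : c * m = M by rewrite /c divfK ?gt_eqF.
have amgm : \int[mu]_(x in D) ((2 * c) * `|s x|) <=
            \int[mu]_(x in D) (s x ^+ 2 + c ^+ 2).
  apply: le_Rintegral => //.
  - exact: (integrableZl mD (2 * c) iA).
  - exact: (integrableD mD is2 (integrable_cst_finite (c ^+ 2) mD Dfin)).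
  - by move=> x _; rewrite -[s x ^+ 2]real_normK ?num_real //; have := sqr_ge0 (`|s x| - c); nra.
move: amgm; rewrite RintegralZl // RintegralD //; last exact: integrable_cst_finite.
rewrite Rintegral_cst // Dm /= -/M -/S => amgm.
have M2 : M ^+ 2 = c * m * M by rewrite cm.
nra.
Qed.

Lemma Rintegral_sqr_weight_ge (D : set T) (c : R) (s g : T -> R) :
  measurable D -> measurable_fun D g -> 0 <= c -> (forall x, D x -> c <= g x <= 1) ->
  mu.-integrable D (fun t => (s t ^+ 2)%:E) ->
  c * \int[mu]_(x in D) s x ^+ 2 <= \int[mu]_(x in D) (s x ^+ 2 * g x).
Proof.
move=> mD mg c0 cg1 is2.
have ms2 : measurable_fun D (fun x => s x ^+ 2).
  by apply/measurable_EFinP; exact: measurable_int is2.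
rewrite -RintegralZl //; apply: le_Rintegral => //.
- exact: (integrableZl mD c is2).
- apply: le_integrable is2 => //.
    by apply/measurable_EFinP; exact: measurable_funM.
  move=> x Dx /=; rewrite lee_fin normrM ler_piMr //.
  by case/andP: (cg1 x Dx) => cg g1; rewrite ger0_norm ?(le_trans c0 cg).
- by move=> x Dx; rewrite mulrC ler_wpM2l ?sqr_ge0 //; case/andP: (cg1 x Dx).
Qed.
End integral_bounds.

Section interval_integrals.
Context {R : realType}.
Local Notation mu := (@lebesgue_measure R).

Lemma lebesgue_measure_itvcc (a b : R) : a <= b -> mu `[a, b] = (b - a)%:E.
Proof.
move=> ab; rewrite lebesgue_measure_itv /= lte_fin.
by case: ltgtP ab => // <- _; rewrite subrr.
Qed.

Lemma Lint_le_upper (a t T : R) (f : R -> R) : t <= T ->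
  measurable_fun `[a, T] f -> (forall x, 0 <= f x) ->
  mu.-integrable `[a, T] (EFin \o f) -> Lint a t f <= Lint a T f.
Proof.
move=> tT mf f0 iT.
have sub : `[a, t] `<=` `[a, T] by apply: subset_itvl; rewrite bnd_simp.
have it : mu.-integrable `[a, t] (EFin \o f) by exact: integrableS iT.
rewrite /Lint /Rintegral fine_le ?(integrable_fin_num _ it) ?(integrable_fin_num _ iT) //.
apply: ge0_subset_integral => //; first exact/measurable_EFinP.
by move=> x _; rewrite lee_fin.
Qed.

Lemma normr_Lint_kernel_le (T : R) (s : R -> R) (k : R -> R -> R) : 0 < T ->
  measurable_fun `[0, T] s -> mu.-integrable `[0, T] (fun t => (s t ^+ 2)%:E) ->
  (forall t x, `|k t x| <= 1) ->
  `|Lint 0 T (fun t => s t * Lint 0 t (fun x => s x * k t x))|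
    <= T * Lint 0 T (fun t => s t ^+ 2).
Proof.
move=> T0 ms is2 k1.
have mD : measurable (`[0, T] : set R) by exact: measurable_itv.
have DT : mu `[0, T] = T%:E by rewrite lebesgue_measure_itvcc ?subr0 ?ltW.
have iA : mu.-integrable `[0, T] (EFin \o (fun t => `|s t|)).
  have Dfin : (mu `[0%R, T] < +oo)%E by rewrite DT ltry.
  exact: (integrable_normr_of_sqr (mu := mu) mD Dfin ms is2).
set M := Lint 0 T (fun t => `|s t|).
have inner t : `[0, T] t -> `|Lint 0 t (fun x => s x * k t x)| <= M.
  rewrite /= in_itv /= => /andP[_ tT].
  have sub : `[0, t] `<=` `[0, T] by apply: subset_itvl; rewrite bnd_simp.
  have mA : measurable_fun `[0, T] (fun x => `|s x|) by exact: measurableT_comp.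
  apply: le_trans (Lint_le_upper tT mA (fun x => normr_ge0 _) iA).
  apply: le_normr_Rintegral_dom; first exact: measurable_itv.
    by move=> x _; rewrite normrM ler_piMr.
  exact: integrableS iA.
have outer : `|Lint 0 T (fun t => s t * Lint 0 t (fun x => s x * k t x))|
    <= M * M.
  rewrite -[X in _ <= X](RintegralZl (mu := mu) M mD iA).
  apply: le_normr_Rintegral_dom => //; last exact: (integrableZl (mu := mu) mD M iA).
  by move=> x Dx; rewrite normrM mulrC ler_wpM2r ?inner.
apply: le_trans outer _; rewrite -expr2.
exact: Rintegral_normr_sqr_le.
Qed.

Lemma normr_sum_Lint_kernel_le (n : nat) (T : R) (s : R -> R)
    (c : 'I_n -> R) (k : 'I_n -> R -> R -> R) : 0 < T ->
  measurable_fun `[0, T] s ->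
  mu.-integrable `[0, T] (fun t => (s t ^+ 2)%:E) ->
  (forall j t x, `|k j t x| <= 1) ->
  `|\sum_(j < n) c j * Lint 0 T (fun t => s t * Lint 0 t (fun x => s x * k j t x))|
    <= (\sum_(j < n) `|c j|) * (T * Lint 0 T (fun t => s t ^+ 2)).
Proof.
move=> T0 ms is2 k1; rewrite mulr_suml; apply: le_trans (ler_norm_sum _ _ _) _.
by apply: ler_sum => j _; rewrite normrM ler_wpM2l ?normr_Lint_kernel_le.
Qed.
End interval_integrals.

Lemma cos_ge_half_near0 (R : realType) :
  exists2 e : R, 0 < e & forall x : R, `|x| < e -> 1 / 2 <= cos x.
Proof.
have /cvgrPdist_lt/(_ (1 / 2) ltac:(by [])) := @continuous_cos R 0.
move=> /nbhs_ballP[e /= e0 cos_near]; exists e => // x xe.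
have := cos_near x; rewrite /ball /= sub0r normrN cos0 => /(_ xe) h.
have := ler_norm (1 - cos x); lra.
Qed.

Lemma sg_mul_lower_bound (R : realFieldType) (a J Y S : R) :
  1 / 2 * S <= J -> `|Y| <= `|a| / 8 * S ->
  `|a| / 8 * S <= - Num.sg a * (- (a / 2) * J + Y).
Proof.
move=> SJ Ya; rewrite mulrDr.
have -> : - Num.sg a * (- (a / 2) * J) = `|a| / 2 * J by rewrite normrEsg; ring.
have : - `|Y| <= - Num.sg a * Y.
  rewrite mulNr lerN2 (le_trans (ler_norm _)) // normrM normr_sg.
  by case: (a != 0); rewrite ?mul1r ?mul0r.
have := normr_ge0 a; nra.
Qed.

Lemma measurable_cos_affine (R : realType) (w b : R) :
  measurable_fun setT (fun t : R => cos (w * (t - b))).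
Proof.
apply: measurableT_comp; first by apply: continuous_measurable_fun; exact: continuous_cos.
by apply: measurableT_comp; [exact: mulrl_measurable | exact: measurable_funB].
Qed.

Theorem lemma2p5 (R : realType) (p' : nat)
  (H0 H1 : 'M[R]_p'.+1)
  (phi : 'I_p'.+1 -> 'cV[R]_p'.+1) (lam : 'I_p'.+1 -> R) (K : 'I_p'.+1) :
  H0^T = H0 -> H1^T = H1 ->
  (forall i j, dotv (phi i) (phi j) = (i == j)%:R) ->
  (forall j, H0 *m phi j = lam j *: phi j) ->
  aK H0 H1 phi ord0 K != 0 ->
  exists Tstar : R, 0 < Tstar /\
    forall (T : R), 0 < T -> T < Tstar ->
    forall s : R -> R,
      measurable_fun `[0, T] s ->
      (@lebesgue_measure R).-integrable `[0, T] (fun t => ((s t) ^+ 2)%:E) ->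
      - Num.sg (aK H0 H1 phi ord0 K) * Qform H0 H1 phi lam ord0 K T s
        >= `|aK H0 H1 phi ord0 K| / 8 * Lint 0 T (fun t => s t ^+ 2).
Proof.
(* Only [a != 0] matters: the estimate holds for arbitrary real coefficients
   and eigenvalues. *)
move=> _ _ _ _ a0.
set a := aK H0 H1 phi ord0 K; set w := lam K - lam ord0.
pose c j := dotv (comm H0 H1 *m phi ord0) (phi j) * dotv (comm H0 H1 *m phi j) (phi K).
pose C := \sum_j `|c j|.
have [e e0 cos_ge] := cos_ge_half_near0 R.
have a_gt0 : 0 < `|a| by rewrite normr_gt0.
have w1 : 0 < `|w| + 1 by apply: ltr_pwDr.
have C8 : 0 < 8 * (C + 1) by rewrite mulr_gt0 // ltr_pwDr // sumr_ge0.
exists (Num.min (e / (`|w| + 1)) (`|a| / (8 * (C + 1)))).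
split; first by rewrite lt_min !divr_gt0.
move=> T T0; rewrite lt_min !ltr_pdivlMr // => /andP[Te Ta] s ms is2.
apply: sg_mul_lower_bound.
  apply: Rintegral_sqr_weight_ge => //.
    exact: measurable_funS (measurable_cos_affine _ _).
  move=> t; rewrite /= in_itv /= => /andP[t0 tT]; rewrite cos_le1 andbT; apply: cos_ge.
  rewrite normrM [`|t - T|]ler0_norm ?subr_le0 //; have := normr_ge0 w; nra.
have kernel_le := normr_sum_Lint_kernel_le c
  (k := fun j t x => sin (lam j * (x - t) + lam K * (t - T) + lam ord0 * (T - x)))
  T0 ms is2 (fun j t x => sin_max _).
apply: le_trans kernel_le _; rewrite -/C mulrA ler_wpM2r //; last nra.
by apply: Rintegral_ge0 => x _; exact: sqr_ge0.
Qed.
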